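(* Let $S\subset\mathbb{Z}^d$ be a finite set, $\mathcal{P}=\{P_\alpha\}_{\alpha\in S}$ a resolution of unity on $\mathbb{C}^D$ and $C$ a $D\times D$ unitary matrix. If $U(S,\mathcal{P},C)$ has an eigenvalue, then there exist a nonzero vector $\phi\in\mathbb{C}^D$ and a point $x_o\in\mathbb{Z}^d$ such that $\limsup_{n\to\infty}p_n(\phi;x_o)>0$.
   Context: A resolution of unity on $\mathbb{C}^D$ indexed by a finite $S\subset\mathbb{Z}^d$ is a family of orthogonal projections $P_\alpha$ with $P_\alpha P_\beta=0$ for $\alpha\ne\beta$ and $\sum_{\alpha\in S}P_\alpha=I$. For $\alpha\in\mathbb{Z}^d$, $\tau^\alpha$ acts on $\ell^2(\mathbb{Z}^d,\mathbb{C}^D)$ by $(\tau^\alpha f)(x)=f(x-\alpha)$. $U(S,\mathcal{P},C)=\big(\sum_{\alpha\in S}\tau^\alpha P_\alpha\big)C$, with $C$ acting pointwise. $\delta_0\otimes\phi$ is the function equal to $\phi$ at $0$ and $0$ elsewhere and $p_n(\phi;x)=\|U(S,\mathcal{P},C)^n(\delta_0\otimes\phi)(x)\|^2_{\mathbb{C}^D}$. Eigenvalue means an element of the point spectrum. *)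

From Stdlib Require Import Reals List ZArith.
Open Scope R_scope.

Definition Cx : Type := (R * R)%type.
Definition C0 : Cx := (0, 0).
Definition C1 : Cx := (1, 0).
Definition Cadd (z w : Cx) : Cx := (fst z + fst w, snd z + snd w).
Definition Cmul (z w : Cx) : Cx :=
  (fst z * fst w - snd z * snd w, fst z * snd w + snd z * fst w).
Definition Cconj (z : Cx) : Cx := (fst z, - snd z).
Definition Cnorm2 (z : Cx) : R := fst z * fst z + snd z * snd z.

Fixpoint Csum (n : nat) (f : nat -> Cx) : Cx :=
  match n with O => C0 | S k => Cadd (Csum k f) (f k) end.
Fixpoint Rsum (n : nat) (f : nat -> R) : R :=
  match n with O => 0 | S k => Rsum k f + f k end.

(* ---------- vectors in C^D and D x D matrices (entries with index < D matter) *)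
Definition vec : Type := nat -> Cx.
Definition mat : Type := nat -> nat -> Cx.
Definition vzero : vec := fun _ => C0.
Definition vadd (u v : vec) : vec := fun i => Cadd (u i) (v i).
Definition mzero : mat := fun _ _ => C0.
Definition madd (A B : mat) : mat := fun i j => Cadd (A i j) (B i j).
Definition idmat : mat := fun i j => if Nat.eqb i j then C1 else C0.
Definition mat_mul (D : nat) (A B : mat) : mat :=
  fun i j => Csum D (fun k => Cmul (A i k) (B k j)).
Definition mat_vec (D : nat) (A : mat) (v : vec) : vec :=
  fun i => Csum D (fun k => Cmul (A i k) (v k)).
Definition adjoint (A : mat) : mat := fun i j => Cconj (A j i).
Definition mat_eq (D : nat) (A B : mat) : Prop :=
  forall i j, (i < D)%nat -> (j < D)%nat -> A i j = B i j.
Definition vnorm2 (D : nat) (v : vec) : R := Rsum D (fun i => Cnorm2 (v i)).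
Definition vnonzero (D : nat) (v : vec) : Prop := exists i, (i < D)%nat /\ v i <> C0.

Definition unitary (D : nat) (U : mat) : Prop :=
  mat_eq D (mat_mul D (adjoint U) U) idmat /\ mat_eq D (mat_mul D U (adjoint U)) idmat.

Definition pt : Type := list Z.
Definition is_pt (d : nat) (x : pt) : Prop := length x = d.
Fixpoint zsub (x y : pt) : pt :=
  match x, y with
  | a :: x', b :: y' => (a - b)%Z :: zsub x' y'
  | _, _ => nil
  end.
Definition origin (d : nat) : pt := repeat 0%Z d.

Definition finite_subset (d : nat) (S : list pt) : Prop :=
  NoDup S /\ Forall (is_pt d) S.

Definition msum_list (S : list pt) (P : pt -> mat) : mat :=
  fold_right (fun a M => madd (P a) M) mzero S.

Definition is_resolution (D : nat) (S : list pt) (P : pt -> mat) : Prop :=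
  (forall a, In a S ->
     mat_eq D (mat_mul D (P a) (P a)) (P a) /\ mat_eq D (adjoint (P a)) (P a)) /\
  (forall a b, In a S -> In b S -> a <> b -> mat_eq D (mat_mul D (P a) (P b)) mzero) /\
  mat_eq D (msum_list S P) idmat.

Definition field : Type := pt -> vec.

Definition vsum_list (S : list pt) (g : pt -> vec) : vec :=
  fold_right (fun a v => vadd (g a) v) vzero S.

Definition U_op (D : nat) (S : list pt) (P : pt -> mat) (Cm : mat) (f : field) : field :=
  fun x => vsum_list S (fun a => mat_vec D (P a) (mat_vec D Cm (f (zsub x a)))).

Definition Rsum_list (xs : list pt) (g : pt -> R) : R :=
  fold_right (fun x r => g x + r) 0 xs.

Definition in_l2 (d D : nat) (f : field) : Prop :=
  exists M : R, forall xs : list pt, NoDup xs -> Forall (is_pt d) xs ->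
    Rsum_list xs (fun x => vnorm2 D (f x)) <= M.

Definition field_nonzero (d D : nat) (f : field) : Prop :=
  exists x, is_pt d x /\ vnonzero D (f x).

Definition is_eigenvalue (d D : nat) (S : list pt) (P : pt -> mat) (Cm : mat) (lam : Cx) : Prop :=
  exists f : field, in_l2 d D f /\ field_nonzero d D f /\
    forall x, is_pt d x -> forall i, (i < D)%nat ->
      U_op D S P Cm f x i = Cmul lam (f x i).

Definition delta0 (d : nat) (phi : vec) : field :=
  fun x => if list_eq_dec Z.eq_dec x (origin d) then phi else vzero.

Definition p_n (d D : nat) (S : list pt) (P : pt -> mat) (Cm : mat)
  (n : nat) (phi : vec) (x : pt) : R :=
  vnorm2 D (Nat.iter n (U_op D S P Cm) (delta0 d phi) x).

(* limsup_{n -> oo} u n > 0, unfolded: some eps > 0 is exceeded infinitely often *)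
Definition limsup_pos (u : nat -> R) : Prop :=
  exists eps, 0 < eps /\ forall N : nat, exists n, (N <= n)%nat /\ eps <= u n.

(* If [U f = lam f] with [f] in l^2, then [|lam| <= 1]: U is isometric on finitely supported
   fields, so [|lam|^(2n)] times the mass of [f] on a finite set stays bounded.  Translate [f]
   so that [phi := f 0 <> 0] and run the walk [g_n = U^n (delta_0 phi)].  Since U is isometric
   and [U^n f = lam^n f], the correlation [<g_n, lam^n f>] equals [|phi|^2] for all n, and
   [|g_n| = |phi|].  Outside a finite set F the field [f] has mass at most [|phi|^2/4], so the
   correlation on F is at least [|phi|^2/2]; by Cauchy-Schwarz [g_n] has mass bounded below at
   some point of F, and by pigeonhole one point of F gets this mass infinitely often. *)

From Pilot Require Import Defs.
From Stdlib Require Import Reals List ZArith Lra Lia Classical Permutation.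
Open Scope R_scope.

Lemma Rsum_ext n f g : (forall i, (i < n)%nat -> f i = g i) -> Rsum n f = Rsum n g.
Proof.
  induction n as [|n IH]; simpl; intros H; auto.
  rewrite IH, H; auto; intros; apply H; lia.
Qed.

Lemma Rsum_add n f g : Rsum n (fun i => f i + g i) = Rsum n f + Rsum n g.
Proof. induction n as [|n IH]; simpl; [lra|rewrite IH; lra]. Qed.

Lemma Rsum_sub n f g : Rsum n (fun i => f i - g i) = Rsum n f - Rsum n g.
Proof. induction n as [|n IH]; simpl; [lra|rewrite IH; lra]. Qed.

Lemma Rsum_mull n c f : Rsum n (fun i => c * f i) = c * Rsum n f.
Proof. induction n as [|n IH]; simpl; [lra|rewrite IH; lra]. Qed.

Lemma Rsum_mulr n c f : Rsum n (fun i => f i * c) = Rsum n f * c.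
Proof. induction n as [|n IH]; simpl; [lra|rewrite IH; lra]. Qed.

Lemma Rsum_le n f g : (forall i, (i < n)%nat -> f i <= g i) -> Rsum n f <= Rsum n g.
Proof.
  induction n as [|n IH]; simpl; intros H; [lra|].
  assert (f n <= g n) by (apply H; lia).
  assert (Rsum n f <= Rsum n g) by (apply IH; intros; apply H; lia).
  lra.
Qed.

Lemma Rsum_eq0 n f : (forall i, (i < n)%nat -> f i = 0) -> Rsum n f = 0.
Proof.
  induction n as [|n IH]; simpl; intros H; auto.
  rewrite IH, H; [lra|lia|]; intros; apply H; lia.
Qed.

Lemma Rsum_ge0 n f : (forall i, (i < n)%nat -> 0 <= f i) -> 0 <= Rsum n f.
Proof. intros H. rewrite <- (Rsum_eq0 n (fun _ => 0)) by auto. apply Rsum_le; auto. Qed.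

Lemma Rsum_ge_term n f j :
  (j < n)%nat -> (forall i, (i < n)%nat -> 0 <= f i) -> f j <= Rsum n f.
Proof.
  induction n as [|n IH]; intros Hj H; [lia|simpl].
  assert (0 <= f n) by (apply H; lia).
  destruct (Nat.eq_dec j n) as [->|Hjn].
  - assert (0 <= Rsum n f) by (apply Rsum_ge0; intros; apply H; lia). lra.
  - assert (f j <= Rsum n f) by (apply IH; [lia|intros; apply H; lia]). lra.
Qed.

Lemma Rsum_single n f j :
  (j < n)%nat -> (forall i, (i < n)%nat -> i <> j -> f i = 0) -> Rsum n f = f j.
Proof.
  induction n as [|n IH]; intros Hj H; [lia|simpl].
  destruct (Nat.eq_dec j n) as [->|Hjn].
  - rewrite Rsum_eq0; [lra|]. intros; apply H; lia.
  - rewrite IH, (H n); [lra|lia|lia|lia|]. intros; apply H; lia.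
Qed.

Lemma Rsum_exchange n m F :
  Rsum n (fun i => Rsum m (fun k => F i k)) = Rsum m (fun k => Rsum n (fun i => F i k)).
Proof.
  induction n as [|n IH]; simpl.
  - symmetry; apply Rsum_eq0; auto.
  - rewrite IH, <- Rsum_add. reflexivity.
Qed.

Lemma Cx_eq (z w : Cx) : fst z = fst w -> snd z = snd w -> z = w.
Proof. destruct z, w; simpl; intros; subst; auto. Qed.

Lemma fst_Csum n f : fst (Csum n f) = Rsum n (fun k => fst (f k)).
Proof. induction n as [|n IH]; simpl; auto. rewrite IH; auto. Qed.

Lemma snd_Csum n f : snd (Csum n f) = Rsum n (fun k => snd (f k)).
Proof. induction n as [|n IH]; simpl; auto. rewrite IH; auto. Qed.

Lemma Csum_ext n f g : (forall i, (i < n)%nat -> f i = g i) -> Csum n f = Csum n g.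
Proof.
  induction n as [|n IH]; simpl; intros H; auto.
  rewrite IH, H; auto; intros; apply H; lia.
Qed.

(* Turns an identity between coordinates of complex sums into one between a
   single real sum of polynomial terms, to be closed by [ring]. *)
Ltac sum_ring :=
  repeat rewrite ?fst_Csum, ?snd_Csum, <- ?Rsum_mull, <- ?Rsum_mulr,
                 <- ?Rsum_add, <- ?Rsum_sub;
  apply Rsum_ext; intros; simpl; ring.

Definition pt_eq_dec : forall x y : pt, {x = y} + {x <> y} := list_eq_dec Z.eq_dec.

Lemma Rsum_list_app l1 l2 g : Rsum_list (l1 ++ l2) g = Rsum_list l1 g + Rsum_list l2 g.
Proof. induction l1 as [|x l IH]; simpl; [lra|rewrite IH; lra]. Qed.

Lemma Rsum_list_add l f g :
  Rsum_list l (fun x => f x + g x) = Rsum_list l f + Rsum_list l g.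
Proof. induction l as [|x l IH]; simpl; [lra|rewrite IH; lra]. Qed.

Lemma Rsum_list_mull l c f : Rsum_list l (fun x => c * f x) = c * Rsum_list l f.
Proof. induction l as [|x l IH]; simpl; [lra|rewrite IH; lra]. Qed.

Lemma Rsum_list_ext l f g : (forall x, In x l -> f x = g x) -> Rsum_list l f = Rsum_list l g.
Proof. induction l as [|x l IH]; simpl; intros H; auto. rewrite H, IH; auto. Qed.

Lemma Rsum_list_eq0 l f : (forall x, In x l -> f x = 0) -> Rsum_list l f = 0.
Proof. induction l as [|x l IH]; simpl; intros H; auto. rewrite H, IH; auto; lra. Qed.

Lemma Rsum_list_le l f g :
  (forall x, In x l -> f x <= g x) -> Rsum_list l f <= Rsum_list l g.
Proof.
  induction l as [|x l IH]; simpl; intros H; [lra|].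
  assert (f x <= g x) by auto. assert (Rsum_list l f <= Rsum_list l g) by auto. lra.
Qed.

Lemma Rsum_list_map l (t : pt -> pt) f : Rsum_list (map t l) f = Rsum_list l (fun x => f (t x)).
Proof. induction l as [|x l IH]; simpl; auto. rewrite IH; auto. Qed.

Lemma Rsum_list_exchange l1 l2 F :
  Rsum_list l1 (fun x => Rsum_list l2 (fun y => F x y))
  = Rsum_list l2 (fun y => Rsum_list l1 (fun x => F x y)).
Proof.
  induction l1 as [|x l IH]; simpl.
  - symmetry; apply Rsum_list_eq0; auto.
  - rewrite IH, <- Rsum_list_add. reflexivity.
Qed.

Lemma Rsum_list_single l f a :
  NoDup l -> In a l -> (forall x, In x l -> x <> a -> f x = 0) -> Rsum_list l f = f a.
Proof.
  induction l as [|y l IH]; simpl; intros Hl Ha H; [contradiction|].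
  inversion Hl as [|? ? Hy Hl']; subst.
  destruct Ha as [<-|Ha].
  - rewrite Rsum_list_eq0; [lra|]. intros x Hx; apply H; auto. intros ->; contradiction.
  - rewrite IH, H; auto; [lra|]. intros ->; contradiction.
Qed.

Lemma Rsum_list_split l f (p : pt -> bool) :
  Rsum_list l f = Rsum_list (filter p l) f + Rsum_list (filter (fun x => negb (p x)) l) f.
Proof. induction l as [|x l IH]; simpl; [lra|]. destruct (p x); simpl; rewrite IH; lra. Qed.

Lemma Rsum_list_filter l f (p : pt -> bool) :
  (forall x, In x l -> p x = false -> f x = 0) -> Rsum_list l f = Rsum_list (filter p l) f.
Proof.
  induction l as [|x l IH]; simpl; intros H; auto.
  destruct (p x) eqn:E; simpl; rewrite IH; auto. rewrite H; auto; lra.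
Qed.

Lemma Rsum_list_perm l1 l2 f : Permutation l1 l2 -> Rsum_list l1 f = Rsum_list l2 f.
Proof. induction 1; simpl; lra. Qed.

Lemma Rsum_list_support l1 l2 f : NoDup l1 -> NoDup l2 ->
  (forall x, In x l1 -> ~ In x l2 -> f x = 0) ->
  (forall x, In x l2 -> ~ In x l1 -> f x = 0) ->
  Rsum_list l1 f = Rsum_list l2 f.
Proof.
  intros N1 N2 H1 H2.
  set (in2 := fun x => if in_dec pt_eq_dec x l2 then true else false).
  set (in1 := fun x => if in_dec pt_eq_dec x l1 then true else false).
  rewrite (Rsum_list_filter l1 f in2), (Rsum_list_filter l2 f in1).
  - apply Rsum_list_perm, NoDup_Permutation; try (apply NoDup_filter; auto).
    intros x. rewrite !filter_In. unfold in1, in2.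
    destruct (in_dec pt_eq_dec x l1), (in_dec pt_eq_dec x l2); intuition congruence.
  - intros x Hx. unfold in1. destruct (in_dec pt_eq_dec x l1); [discriminate|auto].
  - intros x Hx. unfold in2. destruct (in_dec pt_eq_dec x l2); [discriminate|auto].
Qed.

Lemma Rsum_list_incl l l' f : NoDup l -> NoDup l' -> incl l l' ->
  (forall x, In x l' -> 0 <= f x) -> Rsum_list l f <= Rsum_list l' f.
Proof.
  intros N N' I H.
  set (g := fun x => if in_dec pt_eq_dec x l then f x else 0).
  rewrite (Rsum_list_ext l f g)
    by (intros x Hx; unfold g; destruct (in_dec pt_eq_dec x l); tauto).
  rewrite (Rsum_list_support l l' g); auto.
  - apply Rsum_list_le. intros x Hx; unfold g.
    destruct (in_dec pt_eq_dec x l); [lra|auto].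
  - intros x Hx Hx'. exfalso; auto.
  - intros x _ Hx. unfold g; destruct (in_dec pt_eq_dec x l); tauto.
Qed.

Lemma Rsum_list_average (l : list pt) f A :
  0 < A -> A <= Rsum_list l f -> exists x, In x l /\ A / INR (length l) <= f x.
Proof.
  intros HA Hs. apply NNPP. intros Hno.
  assert (Hlt : Rsum_list l f < INR (length l) * (A / INR (length l))).
  { destruct l as [|y l]; [simpl in Hs; lra|].
    assert (Hall : forall x, In x (y :: l) -> f x < A / INR (length (y :: l))).
    { intros x Hx. apply Rnot_le_lt. intro. apply Hno. exists x; auto. }
    clear Hs Hno. revert Hall. generalize (A / INR (length (y :: l))) as b.
    revert y. induction l as [|z l IH]; intros y b Hall.
    - specialize (Hall y (or_introl eq_refl)). simpl. lra.
    - specialize (IH z b (fun x Hx => Hall x (or_intror Hx))).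
      specialize (Hall y (or_introl eq_refl)).
      change (length (y :: z :: l)) with (S (length (z :: l))). rewrite S_INR.
      change (Rsum_list (y :: z :: l) f) with (f y + Rsum_list (z :: l) f). lra. }
  destruct l as [|y l]; [simpl in Hs; lra|].
  field_simplify in Hlt; [lra|]. apply not_0_INR. simpl; lia.
Qed.

(* Real part of the Hermitian inner product on C^D; the argument never needs the imaginary part. *)
Definition vdot (D : nat) (u w : vec) : R :=
  Rsum D (fun i => fst (u i) * fst (w i) + snd (u i) * snd (w i)).

Lemma vnorm2_vdot D u : vnorm2 D u = vdot D u u.
Proof. reflexivity. Qed.

Lemma vdotC D u w : vdot D u w = vdot D w u.
Proof. unfold vdot; apply Rsum_ext; intros; ring. Qed.

Lemma vdot_ext D u u' w w' : (forall i, (i < D)%nat -> u i = u' i) ->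
  (forall i, (i < D)%nat -> w i = w' i) -> vdot D u w = vdot D u' w'.
Proof. intros Hu Hw; unfold vdot; apply Rsum_ext; intros i Hi; rewrite Hu, Hw; auto. Qed.

Lemma vdot_eq0l D u w : (forall i, (i < D)%nat -> u i = C0) -> vdot D u w = 0.
Proof. intros H; unfold vdot; apply Rsum_eq0; intros i Hi; rewrite H by auto; simpl; ring. Qed.

Lemma vdot_vsuml D (S : list pt) g w :
  vdot D (vsum_list S g) w = Rsum_list S (fun a => vdot D (g a) w).
Proof.
  induction S as [|a S IH]; simpl.
  - apply vdot_eq0l; auto.
  - rewrite <- IH. unfold vdot, vadd, Cadd; rewrite <- Rsum_add.
    apply Rsum_ext; intros; simpl; ring.
Qed.

Lemma vdot_young D u w t : 0 < t -> 2 * t * vdot D u w <= t * t * vnorm2 D u + vnorm2 D w.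
Proof.
  intros Ht. unfold vnorm2, vdot, Cnorm2. rewrite <- !Rsum_mull, <- Rsum_add.
  apply Rsum_le. intros i Hi.
  pose proof (Rle_0_sqr (t * fst (u i) - fst (w i))).
  pose proof (Rle_0_sqr (t * snd (u i) - snd (w i))). unfold Rsqr in *. nra.
Qed.

Lemma vdot_lower_bound D u w a M :
  0 < a -> 0 < M -> a <= vdot D u w -> vnorm2 D w <= M -> a * a / M <= vnorm2 D u.
Proof.
  intros Ha HM Hdot Hw.
  pose proof (vdot_young D u w (M / a) ltac:(apply Rdiv_lt_0_compat; lra)) as Hy.
  assert (Hta : M / a * a = M) by (field; lra).
  assert (M <= M / a * (M / a) * vnorm2 D u) by nra.
  apply (Rmult_le_reg_r (M / a * (M / a))); [nra|].
  replace (a * a / M * (M / a * (M / a))) with M by (field; lra). lra.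
Qed.

Lemma vnorm2_ext D u v : (forall i, (i < D)%nat -> u i = v i) -> vnorm2 D u = vnorm2 D v.
Proof. intros H; rewrite !vnorm2_vdot; apply vdot_ext; auto. Qed.

Lemma Cnorm2_ge0 z : 0 <= Cnorm2 z.
Proof. unfold Cnorm2; nra. Qed.

Lemma Cnorm2_gt0 z : z <> C0 -> 0 < Cnorm2 z.
Proof.
  destruct z as [a b]; unfold Cnorm2; simpl; intros H.
  destruct (Req_dec a 0), (Req_dec b 0); subst; [exfalso; auto|nra..].
Qed.

Lemma Cnorm2_mul a b : Cnorm2 (Cmul a b) = Cnorm2 a * Cnorm2 b.
Proof. unfold Cnorm2, Cmul; simpl; ring. Qed.

Lemma vnorm2_ge0 D v : 0 <= vnorm2 D v.
Proof. apply Rsum_ge0; intros; apply Cnorm2_ge0. Qed.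

Lemma vnorm2_gt0 D v : vnonzero D v -> 0 < vnorm2 D v.
Proof.
  intros [i [Hi Hv]]. eapply Rlt_le_trans; [apply (Cnorm2_gt0 _ Hv)|].
  apply (Rsum_ge_term D (fun i => Cnorm2 (v i))); auto. intros; apply Cnorm2_ge0.
Qed.

Lemma vnorm2_scale D c v : vnorm2 D (fun i => Cmul c (v i)) = Cnorm2 c * vnorm2 D v.
Proof. unfold vnorm2. rewrite <- Rsum_mull. apply Rsum_ext; intros; apply Cnorm2_mul. Qed.

Definition Cpow (lam : Cx) (n : nat) : Cx := Nat.iter n (Cmul lam) Defs.C1.

Lemma Cnorm2_pow lam n : Cnorm2 (Cpow lam n) = Cnorm2 lam ^ n.
Proof.
  induction n as [|n IH]; simpl.
  - unfold Cnorm2, Defs.C1; simpl; ring.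
  - rewrite Cnorm2_mul. fold (Cpow lam n). rewrite IH; auto.
Qed.

Lemma vsum_list_ext (S : list pt) g g' i :
  (forall a, In a S -> g a i = g' a i) -> vsum_list S g i = vsum_list S g' i.
Proof.
  induction S as [|a S IH]; simpl; intros H; auto.
  unfold vadd. rewrite H, IH; auto.
Qed.

Lemma vsum_list_eq0 (S : list pt) g i : (forall a, In a S -> g a i = C0) -> vsum_list S g i = C0.
Proof.
  intros H. rewrite (vsum_list_ext S g (fun _ => vzero)) by auto.
  induction S as [|a S IH]; simpl; auto.
  unfold vadd; rewrite IH; [apply Cx_eq; simpl; ring|intros; apply H; simpl; auto].
Qed.

Lemma vsum_list_scale (S : list pt) c g i :
  vsum_list S (fun a j => Cmul c (g a j)) i = Cmul c (vsum_list S g i).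
Proof.
  induction S as [|a S IH]; simpl.
  - apply Cx_eq; unfold Cmul; simpl; ring.
  - unfold vadd at 1. simpl in IH. rewrite IH. apply Cx_eq; unfold Cmul, Cadd, vadd; simpl; ring.
Qed.

Lemma mat_vec_ext D A v v' i :
  (forall k, (k < D)%nat -> v k = v' k) -> mat_vec D A v i = mat_vec D A v' i.
Proof. intros H; unfold mat_vec; apply Csum_ext; intros; rewrite H; auto. Qed.

Lemma mat_vec_mat_eq D A B v i : mat_eq D A B -> (i < D)%nat -> mat_vec D A v i = mat_vec D B v i.
Proof. intros H Hi; unfold mat_vec; apply Csum_ext; intros; rewrite H; auto. Qed.

Lemma mat_vec_mul D A B v i : mat_vec D (mat_mul D A B) v i = mat_vec D A (mat_vec D B v) i.
Proof.
  unfold mat_vec, mat_mul. apply Cx_eq.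
  - rewrite !fst_Csum.
    transitivity (Rsum D (fun k => Rsum D (fun j =>
       (fst (A i j) * fst (B j k) - snd (A i j) * snd (B j k)) * fst (v k) -
       (fst (A i j) * snd (B j k) + snd (A i j) * fst (B j k)) * snd (v k)))).
    + apply Rsum_ext; intros k Hk; simpl. sum_ring.
    + rewrite Rsum_exchange. apply Rsum_ext; intros j Hj; simpl. sum_ring.
  - rewrite !snd_Csum.
    transitivity (Rsum D (fun k => Rsum D (fun j =>
       (fst (A i j) * fst (B j k) - snd (A i j) * snd (B j k)) * snd (v k) +
       (fst (A i j) * snd (B j k) + snd (A i j) * fst (B j k)) * fst (v k)))).
    + apply Rsum_ext; intros k Hk; simpl. sum_ring.
    + rewrite Rsum_exchange. apply Rsum_ext; intros j Hj; simpl. sum_ring.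
Qed.

Lemma mat_vec_id D v i : (i < D)%nat -> mat_vec D idmat v i = v i.
Proof.
  intros Hi. unfold mat_vec, idmat.
  apply Cx_eq; [rewrite fst_Csum|rewrite snd_Csum];
  rewrite (Rsum_single D _ i Hi); try (rewrite Nat.eqb_refl; simpl; ring);
  intros k Hk Hne; destruct (Nat.eqb_spec i k); try lia; simpl; ring.
Qed.

Lemma mat_vec_eq0 D A v i : (forall k, (k < D)%nat -> v k = C0) -> mat_vec D A v i = C0.
Proof.
  intros H. unfold mat_vec.
  apply Cx_eq; [rewrite fst_Csum|rewrite snd_Csum]; simpl; apply Rsum_eq0;
  intros k Hk; rewrite H by auto; simpl; ring.
Qed.

Lemma mat_vec_mzero D v i : mat_vec D mzero v i = C0.
Proof.
  unfold mat_vec, mzero.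
  apply Cx_eq; [rewrite fst_Csum|rewrite snd_Csum]; simpl; apply Rsum_eq0; intros; simpl; ring.
Qed.

Lemma mat_vec_msum D S P v i :
  mat_vec D (msum_list S P) v i = vsum_list S (fun a => mat_vec D (P a) v) i.
Proof.
  induction S as [|a S IH]; [apply mat_vec_mzero|].
  transitivity (Cadd (mat_vec D (P a) v i) (mat_vec D (msum_list S P) v i)).
  - unfold mat_vec, madd, Cadd. apply Cx_eq; simpl; sum_ring.
  - rewrite IH. reflexivity.
Qed.

Lemma mat_vec_scale D A c v i :
  mat_vec D A (fun k => Cmul c (v k)) i = Cmul c (mat_vec D A v i).
Proof. unfold mat_vec, Cmul. apply Cx_eq; simpl; sum_ring. Qed.

Lemma vdot_adjoint D A u w : vdot D (mat_vec D A u) w = vdot D u (mat_vec D (adjoint A) w).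
Proof.
  unfold vdot, mat_vec, adjoint.
  transitivity (Rsum D (fun i => Rsum D (fun k =>
     (fst (A i k) * fst (u k) - snd (A i k) * snd (u k)) * fst (w i) +
     (fst (A i k) * snd (u k) + snd (A i k) * fst (u k)) * snd (w i)))).
  - apply Rsum_ext; intros i Hi. sum_ring.
  - rewrite Rsum_exchange. apply Rsum_ext; intros k Hk. sum_ring.
Qed.

Lemma vdot_selfadjoint D Q u w :
  mat_eq D (adjoint Q) Q -> vdot D (mat_vec D Q u) w = vdot D u (mat_vec D Q w).
Proof.
  intros H. rewrite vdot_adjoint. apply vdot_ext; auto. intros; apply mat_vec_mat_eq; auto.
Qed.

Lemma vdot_unitary D Cm u w :
  unitary D Cm -> vdot D (mat_vec D Cm u) (mat_vec D Cm w) = vdot D u w.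
Proof.
  intros [HC _]. rewrite vdot_adjoint. apply vdot_ext; auto. intros i Hi.
  rewrite <- mat_vec_mul, (mat_vec_mat_eq D _ idmat); auto. apply mat_vec_id; auto.
Qed.

(* Orthogonality of the [P a] collapses the double sum over [S * S] to its diagonal. *)
Lemma vdot_resolution D (S : list pt) P u v : is_resolution D S P -> NoDup S ->
  vdot D (vsum_list S (fun a => mat_vec D (P a) (u a)))
         (vsum_list S (fun b => mat_vec D (P b) (v b)))
  = Rsum_list S (fun a => vdot D (mat_vec D (P a) (u a)) (v a)).
Proof.
  intros [HP [Horth _]] HS. rewrite vdot_vsuml. apply Rsum_list_ext. intros a Ha.
  rewrite vdotC, vdot_vsuml, (Rsum_list_single S _ a HS Ha).
  - destruct (HP a Ha) as [Hidem Hsa].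
    rewrite vdot_selfadjoint, vdotC by auto. apply vdot_ext; auto.
    intros i Hi. rewrite <- mat_vec_mul. apply mat_vec_mat_eq; auto.
  - intros b Hb Hba. destruct (HP b Hb) as [_ Hsa].
    rewrite vdot_selfadjoint, vdotC by auto. apply vdot_eq0l. intros i Hi.
    rewrite <- mat_vec_mul, (mat_vec_mat_eq D _ mzero); auto. apply mat_vec_mzero.
Qed.

Lemma vdot_resolution_sum D (S : list pt) P u w : is_resolution D S P ->
  Rsum_list S (fun a => vdot D (mat_vec D (P a) u) w) = vdot D u w.
Proof.
  intros [_ [_ Hsum]]. rewrite <- vdot_vsuml. apply vdot_ext; auto. intros i Hi.
  rewrite <- mat_vec_msum, (mat_vec_mat_eq D _ idmat); auto. apply mat_vec_id; auto.
Qed.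

Fixpoint zadd (x y : pt) : pt :=
  match x, y with
  | a :: x', b :: y' => (a + b)%Z :: zadd x' y'
  | _, _ => nil
  end.

Lemma zsub_length x y : length (zsub x y) = Nat.min (length x) (length y).
Proof. revert y; induction x; destruct y; simpl; auto. Qed.

Lemma zadd_length x y : length (zadd x y) = Nat.min (length x) (length y).
Proof. revert y; induction x; destruct y; simpl; auto. Qed.

Lemma zsub_pt d x y : is_pt d x -> is_pt d y -> is_pt d (zsub x y).
Proof. unfold is_pt; intros; rewrite zsub_length; lia. Qed.

Lemma zadd_pt d x y : is_pt d x -> is_pt d y -> is_pt d (zadd x y).
Proof. unfold is_pt; intros; rewrite zadd_length; lia. Qed.

Lemma zaddK x a : length x = length a -> zsub (zadd x a) a = x.
Proof.
  revert a; induction x as [|h x IH]; intros [|b a]; simpl; intros H;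
  try discriminate; auto; f_equal; [lia|apply IH; simpl in *; lia].
Qed.

Lemma zsubK x a : length x = length a -> zadd (zsub x a) a = x.
Proof.
  revert a; induction x as [|h x IH]; intros [|b a]; simpl; intros H;
  try discriminate; auto; f_equal; [lia|apply IH; simpl in *; lia].
Qed.

Lemma zadd_zsubC x a y :
  length x = length a -> length y = length a -> zadd (zsub x a) y = zsub (zadd x y) a.
Proof.
  revert a y; induction x as [|h x IH]; intros [|b a] [|c y]; simpl; intros H1 H2;
  try discriminate; auto; f_equal; [lia|apply IH; simpl in *; lia].
Qed.

Lemma origin_pt d : is_pt d (origin d).
Proof. apply repeat_length. Qed.

Lemma zadd0 d y : is_pt d y -> zadd (origin d) y = y.
Proof.
  unfold is_pt, origin. revert d; induction y; destruct d; simpl; intros H;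
  try discriminate; auto. f_equal; auto.
Qed.

Lemma NoDup_map_inj_on (t : pt -> pt) l :
  NoDup l -> (forall x y, In x l -> In y l -> t x = t y -> x = y) -> NoDup (map t l).
Proof.
  induction l as [|a l IH]; simpl; intros N H; constructor; inversion N; subst.
  - intros Hin. apply in_map_iff in Hin. destruct Hin as [y [E Hy]].
    assert (y = a) by (apply H; auto). subst; contradiction.
  - apply IH; auto.
Qed.

Definition lattice_set (d : nat) (L : list pt) : Prop := NoDup L /\ forall x, In x L -> is_pt d x.

Lemma lattice_set1 d x : is_pt d x -> lattice_set d (x :: nil).
Proof. intros H. split; [repeat constructor; simpl; tauto|simpl; intros y [<-|[]]; auto]. Qed.

Lemma lattice_set_app d L1 L2 : lattice_set d L1 -> lattice_set d L2 ->
  (forall x, In x L2 -> ~ In x L1) -> lattice_set d (L1 ++ L2).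
Proof.
  intros [N1 H1] [N2 H2] Hdis. split.
  - apply NoDup_app; auto. intros x Hx1 Hx2. exact (Hdis x Hx2 Hx1).
  - intros x Hx; apply in_app_iff in Hx; destruct Hx; auto.
Qed.

Definition sumset (S L : list pt) : list pt :=
  nodup pt_eq_dec (flat_map (fun x => map (fun a => zadd x a) S) L).
Definition diffset (S L : list pt) : list pt :=
  nodup pt_eq_dec (flat_map (fun x => map (fun a => zsub x a) S) L).

Lemma sumset_lattice d S L :
  (forall a, In a S -> is_pt d a) -> lattice_set d L -> lattice_set d (sumset S L).
Proof.
  intros HS [N HL]. split; [apply NoDup_nodup|]. intros y Hy.
  apply nodup_In, in_flat_map in Hy. destruct Hy as [x [Hx Hy]].
  apply in_map_iff in Hy. destruct Hy as [a [<- Ha]]. apply zadd_pt; auto.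
Qed.

Lemma diffset_lattice d S L :
  (forall a, In a S -> is_pt d a) -> lattice_set d L -> lattice_set d (diffset S L).
Proof.
  intros HS [N HL]. split; [apply NoDup_nodup|]. intros y Hy.
  apply nodup_In, in_flat_map in Hy. destruct Hy as [x [Hx Hy]].
  apply in_map_iff in Hy. destruct Hy as [a [<- Ha]]. apply zsub_pt; auto.
Qed.

Lemma sumset_in S L x a : In x L -> In a S -> In (zadd x a) (sumset S L).
Proof. intros. apply nodup_In, in_flat_map. exists x; split; auto. apply in_map; auto. Qed.

Lemma diffset_in S L x a : In x L -> In a S -> In (zsub x a) (diffset S L).
Proof. intros. apply nodup_In, in_flat_map. exists x; split; auto. apply in_map; auto. Qed.

Definition supported_in (d D : nat) (h : field) (L : list pt) : Prop :=
  forall x, is_pt d x -> ~ In x L -> forall i, (i < D)%nat -> h x i = C0.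

Definition field_norm2 (D : nat) (L : list pt) (f : field) : R :=
  Rsum_list L (fun x => vnorm2 D (f x)).

Definition l2_bounded (d D : nat) (f : field) (M : R) : Prop :=
  forall L, lattice_set d L -> field_norm2 D L f <= M.

Lemma in_l2_bounded d D f : in_l2 d D f -> exists M, l2_bounded d D f M.
Proof. intros [M HM]. exists M. intros L [N HL]. apply HM; auto. apply Forall_forall; auto. Qed.

(* Take a finite set whose mass is within [eta] of the supremum of all finite masses. *)
Lemma l2_bounded_tail d D f M : l2_bounded d D f M -> forall eta, 0 < eta ->
  exists F, lattice_set d F /\
    forall L, lattice_set d L -> (forall x, In x L -> ~ In x F) -> field_norm2 D L f <= eta.
Proof.
  intros HM eta Heta.
  set (E := fun r => exists L, lattice_set d L /\ r = field_norm2 D L f).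
  destruct (completeness E) as [sup [Hub Hlub]].
  - exists M. intros r [L [HL ->]]. auto.
  - exists 0, nil. split; [split; [constructor|simpl; tauto]|reflexivity].
  - assert (HF : exists F, lattice_set d F /\ sup - eta < field_norm2 D F f).
    { apply NNPP; intro Hno. assert (sup <= sup - eta); [|lra].
      apply Hlub. intros r [L [HL ->]]. apply Rnot_lt_le. intro. apply Hno. exists L; auto. }
    destruct HF as [F [HF Hsup]]. exists F. split; auto. intros L HL Hdis.
    assert (field_norm2 D (F ++ L) f <= sup)
      by (apply Hub; exists (F ++ L); split; auto; apply lattice_set_app; auto).
    unfold field_norm2 in *. rewrite Rsum_list_app in H. lra.
Qed.

Lemma l2_bounded_translate d D f M y :
  is_pt d y -> l2_bounded d D f M -> l2_bounded d D (fun x => f (zadd x y)) M.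
Proof.
  intros Hy HM L [NL HL]. unfold field_norm2.
  rewrite <- (Rsum_list_map L (fun x => zadd x y) (fun z => vnorm2 D (f z))).
  apply HM. split.
  - apply NoDup_map_inj_on; auto. intros x z Hx Hz E.
    rewrite <- (zaddK x y), <- (zaddK z y), E; auto;
    unfold is_pt in *; rewrite ?(HL _ Hx), ?(HL _ Hz), Hy; auto.
  - intros z Hz. apply in_map_iff in Hz. destruct Hz as [x [<- Hx]]. apply zadd_pt; auto.
Qed.

Lemma delta0_origin d phi : delta0 d phi (origin d) = phi.
Proof. unfold delta0. destruct (list_eq_dec Z.eq_dec (origin d) (origin d)); congruence. Qed.

Lemma delta0_supported d D phi : supported_in d D (delta0 d phi) (origin d :: nil).
Proof.
  intros x _ Hx i Hi. unfold delta0.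
  destruct (list_eq_dec Z.eq_dec x (origin d)) as [->|]; [exfalso; apply Hx; left|]; auto.
Qed.

Lemma correlation_concentrates d D (g k : field) L F c M :
  lattice_set d L -> lattice_set d F -> 0 < c -> 0 < M -> supported_in d D g L ->
  Rsum_list L (fun x => vdot D (g x) (k x)) = c -> field_norm2 D L g = c ->
  (forall T, lattice_set d T -> (forall x, In x T -> ~ In x F) -> field_norm2 D T k <= c / 4) ->
  (forall x, In x F -> vnorm2 D (k x) <= M) ->
  exists x, In x F /\
    (c / 2 / INR (length F)) * (c / 2 / INR (length F)) / M <= vnorm2 D (g x).
Proof.
  intros HL HF Hc HM Hg Hdot Hnorm Htail Hk.
  set (r := fun x => vdot D (g x) (k x)).
  set (inF := fun x => if in_dec pt_eq_dec x F then true else false).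
  set (T := filter (fun x => negb (inF x)) L).
  assert (HT : lattice_set d T).
  { split; [apply NoDup_filter, HL|]. intros x Hx; apply filter_In in Hx. apply HL; tauto. }
  assert (HTF : forall x, In x T -> ~ In x F).
  { intros x Hx Hin. apply filter_In in Hx. destruct Hx as [_ Hx]. unfold inF in Hx.
    destruct (in_dec pt_eq_dec x F); simpl in Hx; [discriminate|contradiction]. }
  assert (HrF : Rsum_list (filter inF L) r = Rsum_list F r).
  { apply Rsum_list_support; [apply NoDup_filter, HL|apply HF| |].
    - intros x Hx Hnx. apply filter_In in Hx. destruct Hx as [_ Hx]. unfold inF in Hx.
      destruct (in_dec pt_eq_dec x F); [contradiction|discriminate].
    - intros x Hx Hnx. apply vdot_eq0l. intros i Hi. apply Hg; auto; [apply HF; auto|].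
      intro HxL. apply Hnx, filter_In. unfold inF. destruct (in_dec pt_eq_dec x F); tauto. }
  (* Off [F] the correlation is small: [2 (1/2) <g,k> <= |g|^2 / 4 + |k|^2]. *)
  assert (HrT : Rsum_list T r <= c / 2).
  { apply Rle_trans with (Rsum_list T (fun x => / 4 * vnorm2 D (g x) + vnorm2 D (k x))).
    { apply Rsum_list_le. intros x _.
      pose proof (vdot_young D (g x) (k x) (/ 2) ltac:(lra)). unfold r. lra. }
    rewrite Rsum_list_add, Rsum_list_mull.
    assert (field_norm2 D T g <= c).
    { rewrite <- Hnorm. apply Rsum_list_incl; [apply HT|apply HL| |intros; apply vnorm2_ge0].
      intros x Hx. apply filter_In in Hx; tauto. }
    pose proof (Htail T HT HTF). unfold field_norm2 in *. lra. }
  assert (Hsplit := Rsum_list_split L r inF). fold T in Hsplit.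
  assert (HcF : c / 2 <= Rsum_list F r) by (fold r in Hdot; rewrite <- HrF; lra).
  destruct (Rsum_list_average F r (c / 2) ltac:(lra) HcF) as [x [HxF Hrx]].
  exists x. split; auto.
  apply (vdot_lower_bound D _ (k x)); auto.
  destruct F as [|y F']; [contradiction|].
  apply Rdiv_lt_0_compat; [lra|]. apply lt_0_INR. simpl; lia.
Qed.

Lemma infinitely_often_in_finite (F : list pt) (h : nat -> pt -> R) eps :
  (forall n, exists x, In x F /\ eps <= h n x) ->
  exists x, In x F /\ forall N, exists n, (N <= n)%nat /\ eps <= h n x.
Proof.
  intros Hn. apply NNPP; intro Hno.
  assert (Hfin : forall x, In x F -> exists N, forall n, (N <= n)%nat -> h n x < eps).
  { intros x Hx. apply NNPP; intro H1. apply Hno. exists x; split; auto.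
    intro N. apply NNPP; intro H2. apply H1. exists N. intros n Hn'.
    apply Rnot_le_lt. intro H3. apply H2. exists n; auto. }
  assert (HN : exists N, forall x, In x F -> forall n, (N <= n)%nat -> h n x < eps).
  { clear Hn Hno. induction F as [|y F IH].
    - exists 0%nat; intros x [].
    - destruct IH as [N1 H1]; [intros; apply Hfin; simpl; auto|].
      destruct (Hfin y (or_introl eq_refl)) as [N2 H2]. exists (max N1 N2).
      intros x [<-|Hx] n Hn; [apply H2|apply H1; auto]; lia. }
  destruct HN as [N HN]. destruct (Hn N) as [x [Hx He]].
  specialize (HN x Hx N (le_n N)). lra.
Qed.

Section Walk.

Variables (d D : nat) (S : list pt) (P : pt -> mat) (Cm : mat).
Hypothesis HS : finite_subset d S.
Hypothesis HP : is_resolution D S P.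
Hypothesis HC : unitary D Cm.

Local Notation U := (U_op D S P Cm).

Lemma shift_pt a : In a S -> is_pt d a.
Proof. destruct HS as [_ H]. rewrite Forall_forall in H. auto. Qed.

Lemma U_op_ext h h' x i :
  (forall a, In a S -> forall k, (k < D)%nat -> h (zsub x a) k = h' (zsub x a) k) ->
  U h x i = U h' x i.
Proof.
  intros H. apply vsum_list_ext. intros a Ha.
  apply mat_vec_ext; intros k Hk. apply mat_vec_ext; intros; apply H; auto.
Qed.

Lemma U_op_scale c h x i : U (fun y j => Cmul c (h y j)) x i = Cmul c (U h x i).
Proof.
  unfold U_op. rewrite <- vsum_list_scale. apply vsum_list_ext. intros a Ha.
  rewrite <- mat_vec_scale. apply mat_vec_ext. intros k Hk. apply mat_vec_scale.
Qed.

Lemma U_op_translate f y x i : is_pt d x -> is_pt d y ->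
  U (fun z => f (zadd z y)) x i = U f (zadd x y) i.
Proof.
  intros Hx Hy. apply vsum_list_ext. intros a Ha.
  apply mat_vec_ext; intros k Hk. apply mat_vec_ext; intros j Hj.
  rewrite zadd_zsubC; auto; unfold is_pt in *; rewrite ?Hx, ?Hy, (shift_pt a Ha); auto.
Qed.

Lemma U_op_supported h L : supported_in d D h L -> supported_in d D (U h) (sumset S L).
Proof.
  intros Hh x Hx Hnot i Hi. apply vsum_list_eq0. intros a Ha.
  apply mat_vec_eq0. intros k Hk. apply mat_vec_eq0. intros j Hj.
  apply Hh; auto; [apply zsub_pt; auto; apply shift_pt; auto|].
  intros Hin. apply Hnot. rewrite <- (zsubK x a); [apply sumset_in; auto|].
  unfold is_pt in *. rewrite Hx, shift_pt; auto.
Qed.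

(* Polarised isometry of U on fields supported in a finite set: expand with
   [vdot_resolution], reindex [x - a = z], then sum out the [P a] and cancel [C]. *)
Lemma U_op_isometry h k L L' : lattice_set d L -> lattice_set d L' ->
  (forall x a, In x L -> In a S -> In (zadd x a) L') -> supported_in d D h L ->
  Rsum_list L' (fun x => vdot D (U h x) (U k x)) = Rsum_list L (fun z => vdot D (h z) (k z)).
Proof.
  intros [NL HL] [NL' HL'] HLL' Hh.
  set (F := fun a z => vdot D (mat_vec D (P a) (mat_vec D Cm (h z))) (mat_vec D Cm (k z))).
  transitivity (Rsum_list L' (fun x => Rsum_list S (fun a => F a (zsub x a)))).
  { apply Rsum_list_ext; intros x Hx. apply vdot_resolution; auto. apply HS. }
  rewrite Rsum_list_exchange.
  transitivity (Rsum_list S (fun a => Rsum_list L (fun z => F a z))).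
  - apply Rsum_list_ext; intros a Ha.
    assert (Ha' := shift_pt a Ha). unfold is_pt in Ha'.
    rewrite <- (Rsum_list_map L' (fun x => zsub x a) (F a)).
    apply Rsum_list_support; auto.
    + apply NoDup_map_inj_on; auto. intros x y Hx Hy E.
      rewrite <- (zsubK x a), <- (zsubK y a), E; auto;
      unfold is_pt in HL'; rewrite ?(HL' _ Hx), ?(HL' _ Hy), Ha'; auto.
    + intros z Hz Hnz. apply in_map_iff in Hz. destruct Hz as [x [<- Hx]].
      apply vdot_eq0l. intros i Hi. apply mat_vec_eq0. intros j Hj. apply mat_vec_eq0.
      intros l Hl. apply Hh; auto. apply zsub_pt; auto.
    + intros z Hz Hnz. exfalso. apply Hnz, in_map_iff. exists (zadd z a). split.
      * apply zaddK. rewrite HL, Ha'; auto.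
      * apply HLL'; auto.
  - rewrite Rsum_list_exchange. apply Rsum_list_ext; intros z Hz.
    unfold F. rewrite vdot_resolution_sum by auto. apply vdot_unitary; auto.
Qed.

Lemma U_iter_supported h L n :
  supported_in d D h L -> supported_in d D (Nat.iter n U h) (Nat.iter n (sumset S) L).
Proof. intros Hh. induction n as [|n IH]; simpl; auto. apply U_op_supported; auto. Qed.

Lemma U_iter_isometry h k L n : lattice_set d L -> supported_in d D h L ->
  Rsum_list (Nat.iter n (sumset S) L) (fun x => vdot D (Nat.iter n U h x) (Nat.iter n U k x))
  = Rsum_list L (fun x => vdot D (h x) (k x)).
Proof.
  intros HL Hh.
  assert (HLn : forall m, lattice_set d (Nat.iter m (sumset S) L)).
  { induction m; simpl; auto. apply sumset_lattice; auto. apply shift_pt. }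
  induction n as [|n IH]; simpl; auto. rewrite <- IH.
  apply U_op_isometry; [apply HLn|apply (HLn (Datatypes.S n))| |apply U_iter_supported; auto].
  intros; apply sumset_in; auto.
Qed.

Definition eigen_field (lam : Cx) (f : field) : Prop :=
  forall x, is_pt d x -> forall i, (i < D)%nat -> U f x i = Cmul lam (f x i).

Lemma eigen_field_translate lam f y :
  is_pt d y -> eigen_field lam f -> eigen_field lam (fun x => f (zadd x y)).
Proof.
  intros Hy Hf x Hx i Hi. rewrite U_op_translate by auto. apply Hf; auto. apply zadd_pt; auto.
Qed.

Lemma U_iter_eigen lam f n x i : eigen_field lam f -> is_pt d x -> (i < D)%nat ->
  Nat.iter n U f x i = Cmul (Cpow lam n) (f x i).
Proof.
  intros Hf. revert x i. induction n as [|n IH]; intros x i Hx Hi; simpl.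
  - apply Cx_eq; unfold Cmul; simpl; ring.
  - rewrite (U_op_ext _ (fun y j => Cmul (Cpow lam n) (f y j))).
    + rewrite U_op_scale, Hf by auto. fold (Cpow lam n).
      apply Cx_eq; unfold Cmul; simpl; ring.
    + intros a Ha k Hk. apply IH; auto. apply zsub_pt; auto. apply shift_pt; auto.
Qed.

(* On the finite set [F] the eigenvector [f] is the image of its restriction [h] to [F - S],
   so [|lam|^2 |f|_F|^2 = |U h|_F|^2 <= |h|^2]. *)
Lemma eigen_field_norm2_le lam f F : eigen_field lam f -> lattice_set d F ->
  Cnorm2 lam * field_norm2 D F f <= field_norm2 D (diffset S F) f.
Proof.
  intros Hf HF.
  set (G := diffset S F).
  assert (HG : lattice_set d G) by (apply diffset_lattice; auto; apply shift_pt).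
  set (h := fun x => if in_dec pt_eq_dec x G then f x else vzero).
  assert (Hh : supported_in d D h G).
  { intros x _ Hx i Hi. unfold h. destruct (in_dec pt_eq_dec x G); tauto. }
  set (L' := nodup pt_eq_dec (F ++ sumset S G)).
  assert (HL' : lattice_set d L').
  { split; [apply NoDup_nodup|]. intros x Hx. apply nodup_In, in_app_iff in Hx.
    destruct Hx as [Hx|Hx]; [apply HF; auto|].
    apply (sumset_lattice d S G shift_pt HG); auto. }
  unfold field_norm2. rewrite <- Rsum_list_mull.
  transitivity (Rsum_list F (fun x => vnorm2 D (U h x))).
  { apply Req_le, Rsum_list_ext. intros x Hx. rewrite <- vnorm2_scale.
    apply vnorm2_ext. intros i Hi. rewrite <- Hf by (auto; apply HF; auto).
    apply U_op_ext. intros a Ha k Hk. unfold h.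
    destruct (in_dec pt_eq_dec (zsub x a) G) as [_|HnG]; auto.
    exfalso; apply HnG, diffset_in; auto. }
  eapply Rle_trans.
  { apply (Rsum_list_incl F L'); [apply HF|apply HL'| |intros; apply vnorm2_ge0].
    intros x Hx. apply nodup_In, in_app_iff; auto. }
  apply Req_le.
  change (Rsum_list L' (fun x => vdot D (U h x) (U h x))
          = Rsum_list G (fun x => vnorm2 D (f x))).
  rewrite (U_op_isometry h h G L'); auto.
  - apply Rsum_list_ext; intros x Hx. unfold h. destruct (in_dec pt_eq_dec x G); tauto.
  - intros x a Hx Ha. apply nodup_In, in_app_iff. right. apply sumset_in; auto.
Qed.

Lemma eigenvalue_norm_le1 lam f M x1 : eigen_field lam f -> l2_bounded d D f M ->
  is_pt d x1 -> vnonzero D (f x1) -> Cnorm2 lam <= 1.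
Proof.
  intros Hf HM Hx1 Hnz.
  set (q := Cnorm2 lam). assert (Hq0 : 0 <= q) by apply Cnorm2_ge0.
  assert (Hiter : forall n F, lattice_set d F -> q ^ n * field_norm2 D F f <= M).
  { induction n as [|n IH]; intros F HF; simpl.
    - rewrite Rmult_1_l; auto.
    - assert (q * field_norm2 D F f <= field_norm2 D (diffset S F) f)
        by (apply eigen_field_norm2_le; auto).
      assert (q ^ n * field_norm2 D (diffset S F) f <= M)
        by (apply IH, diffset_lattice; auto; apply shift_pt).
      assert (0 <= q ^ n) by (apply pow_le; auto). nra. }
  set (c := field_norm2 D (x1 :: nil) f).
  assert (Hc : 0 < c) by (unfold c, field_norm2; simpl; pose proof (vnorm2_gt0 D _ Hnz); lra).
  destruct (Rle_or_lt q 1) as [Hq|Hq]; auto. exfalso.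
  destruct (Pow_x_infinity q ltac:(rewrite Rabs_pos_eq; lra) (M / c + 1)) as [N HN].
  specialize (HN N (le_n N)). rewrite Rabs_pos_eq in HN by (apply pow_le; auto).
  pose proof (Hiter N _ (lattice_set1 d x1 Hx1)). fold c in H.
  assert ((M / c + 1) * c <= q ^ N * c) by (apply Rmult_le_compat_r; lra).
  replace ((M / c + 1) * c) with (M + c) in H0 by (field; lra). lra.
Qed.

Lemma walk_visits_uniformly lam f M F : eigen_field lam f -> l2_bounded d D f M ->
  vnonzero D (f (origin d)) -> lattice_set d F ->
  (forall L, lattice_set d L -> (forall x, In x L -> ~ In x F) ->
     field_norm2 D L f <= vnorm2 D (f (origin d)) / 4) ->
  exists eps, 0 < eps /\
    forall n, exists x, In x F /\ eps <= p_n d D S P Cm n (f (origin d)) x.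
Proof.
  intros Hf HM Hnz HF Htail.
  set (phi := f (origin d)). set (c := vnorm2 D phi).
  assert (Hc : 0 < c) by (apply vnorm2_gt0; auto).
  assert (Hq : Cnorm2 lam <= 1)
    by (apply (eigenvalue_norm_le1 lam f M (origin d)); auto; apply origin_pt).
  assert (Hfx : forall x, is_pt d x -> vnorm2 D (f x) <= M).
  { intros x Hx. pose proof (HM _ (lattice_set1 d x Hx)) as Hx1.
    unfold field_norm2 in Hx1; simpl in Hx1. lra. }
  assert (HcM : 0 < M) by (pose proof (Hfx _ (origin_pt d)); fold phi c in H; lra).
  set (a := c / 2 / INR (length F)).
  assert (Hvisit : forall n, exists x, In x F /\ a * a / M <= p_n d D S P Cm n phi x).
  { intro n.
    set (L := Nat.iter n (sumset S) (origin d :: nil)).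
    set (k := fun x j => Cmul (Cpow lam n) (f x j)).
    assert (HL : lattice_set d L).
    { unfold L. induction n; simpl; [apply lattice_set1, origin_pt|].
      apply sumset_lattice; auto. apply shift_pt. }
    assert (Hk : forall x, vnorm2 D (k x) <= vnorm2 D (f x)).
    { intros x. unfold k. rewrite vnorm2_scale, Cnorm2_pow.
      pose proof (pow_incr _ 1 n (conj (Cnorm2_ge0 lam) Hq)). rewrite pow1 in H.
      pose proof (pow_le _ n (Cnorm2_ge0 lam)).
      pose proof (vnorm2_ge0 D (f x)). nra. }
    assert (Hwalk : forall k0,
      Rsum_list L (fun x => vdot D (Nat.iter n U (delta0 d phi) x) (Nat.iter n U k0 x))
      = vdot D phi (k0 (origin d))).
    { intros k0. unfold L.
      rewrite U_iter_isometry; [|apply lattice_set1, origin_pt|apply delta0_supported].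
      simpl. rewrite delta0_origin. ring. }
    apply (correlation_concentrates d D _ k L F c M); auto.
    - apply U_iter_supported, delta0_supported.
    - etransitivity; [|apply (Hwalk f)]. apply Rsum_list_ext. intros x Hx. apply vdot_ext; auto.
      intros i Hi. symmetry. apply U_iter_eigen; auto. apply HL; auto.
    - etransitivity; [apply (Hwalk (delta0 d phi))|]. rewrite delta0_origin. reflexivity.
    - intros T HT HTF. eapply Rle_trans; [|apply (Htail T HT HTF)].
      apply Rsum_list_le. intros; apply Hk.
    - intros x Hx. eapply Rle_trans; [apply Hk|apply Hfx, HF; auto]. }
  exists (a * a / M). split; auto.
  destruct (Hvisit 0%nat) as [x [HxF _]].
  assert (0 < a); [|apply Rdiv_lt_0_compat; nra].
  apply Rdiv_lt_0_compat; [lra|]. apply lt_0_INR. destruct F; [contradiction|simpl; lia].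
Qed.

End Walk.

Theorem lemma2p2 (d D : nat) (S : list pt) (P : pt -> mat) (Cm : mat) :
  finite_subset d S ->
  is_resolution D S P ->
  unitary D Cm ->
  (exists lam : Cx, is_eigenvalue d D S P Cm lam) ->
  exists (phi : vec) (xo : pt),
    vnonzero D phi /\ is_pt d xo /\
    limsup_pos (fun n => p_n d D S P Cm n phi xo).
Proof.
  intros HS HP HC [lam [f [Hl2 [[y [Hy Hfy]] Heig]]]].
  destruct (in_l2_bounded _ _ _ Hl2) as [M HM].
  set (f0 := fun x => f (zadd x y)).
  assert (Hf0 : vnonzero D (f0 (origin d))) by (unfold f0; rewrite zadd0; auto).
  assert (Heig0 : eigen_field d D S P Cm lam f0) by (apply eigen_field_translate; auto).
  assert (HM0 : l2_bounded d D f0 M) by (apply l2_bounded_translate; auto).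
  destruct (l2_bounded_tail d D f0 M HM0 (vnorm2 D (f0 (origin d)) / 4)) as [F [HF Htail]].
  { pose proof (vnorm2_gt0 D _ Hf0). lra. }
  destruct (walk_visits_uniformly d D S P Cm HS HP HC lam f0 M F) as [eps [Heps Hvisit]]; auto.
  destruct (infinitely_often_in_finite F _ eps Hvisit) as [x [HxF Hinf]].
  exists (f0 (origin d)), x. repeat split; auto; [apply HF; auto|].
  exists eps; auto.
Qed.
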